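(* Let $(G,\preceq)$ be a left-ordered group. Let $S^+$ be the set of elements $h\succ id$ such that $h\preceq w$ for every crossing $(f,g,u,v,w)$ of the left-translation action of $G$ on $(G,\preceq)$ with $id\preceq u$; let $S^-$ be the set of elements $h\prec id$ such that $w\preceq h$ for every such crossing with $v\preceq id$; and let $S=\{id\}\cup S^+\cup S^-$. Then the Conradian soul of $(G,\preceq)$ coincides with $S$.
   Context: A left-ordering is a total order invariant under left multiplication; it is Conradian if for all $f\succ id$, $g\succ id$ there is $n\in\mathbb{N}$ with $fg^n\succ g$. A subset $C$ is convex if $f_1\prec h\prec f_2$ with $f_1,f_2\in C$ implies $h\in C$. The Conradian soul $C_\preceq(G)$ is the maximal (for inclusion) $\preceq$-convex subgroup on which the restriction of $\preceq$ is Conradian. A crossing for the left-translation action is a 5-tuple $(f,g,u,v,w)$ of elements of $G$ with: $u\prec w\prec v$; $g^nu\prec v$ and $f^nv\succ u$ for all $n\in\mathbb{N}$; and $f^Nv\prec w\prec g^Mu$ for some $M,N\in\mathbb{N}$. *)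

Section LO.
Variables (G : Type) (mul : G -> G -> G) (e : G) (inv : G -> G)
          (lt : G -> G -> Prop).

Definition is_group : Prop :=
  (forall a b c, mul a (mul b c) = mul (mul a b) c) /\
  (forall a, mul e a = a) /\ (forall a, mul a e = a) /\
  (forall a, mul (inv a) a = e) /\ (forall a, mul a (inv a) = e).

Definition le (a b : G) : Prop := lt a b \/ a = b.

Definition is_left_ordering : Prop :=
  (forall a, ~ lt a a) /\
  (forall a b c, lt a b -> lt b c -> lt a c) /\
  (forall a b, lt a b \/ a = b \/ lt b a) /\
  (forall a b c, lt a b -> lt (mul c a) (mul c b)).

Fixpoint pow (g : G) (n : nat) : G :=
  match n with O => e | S n => mul g (pow g n) end.

Definition is_subgroup (C : G -> Prop) : Prop :=
  C e /\ (forall a b, C a -> C b -> C (mul a b)) /\ (forall a, C a -> C (inv a)).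

Definition is_convex (C : G -> Prop) : Prop :=
  forall f1 h f2, C f1 -> C f2 -> lt f1 h -> lt h f2 -> C h.

Definition conradian_on (C : G -> Prop) : Prop :=
  forall f g, C f -> C g -> lt e f -> lt e g ->
    exists n : nat, lt g (mul f (pow g n)).

Definition convex_conradian (C : G -> Prop) : Prop :=
  is_subgroup C /\ is_convex C /\ conradian_on C.

Definition is_conradian_soul (C : G -> Prop) : Prop :=
  convex_conradian C /\
  forall D, convex_conradian D -> (forall x, C x -> D x) -> forall x, D x -> C x.

Definition crossing (f g u v w : G) : Prop :=
  lt u w /\ lt w v /\
  (forall n : nat, lt (mul (pow g n) u) v) /\
  (forall n : nat, lt u (mul (pow f n) v)) /\
  (exists M N : nat, lt (mul (pow f N) v) w /\ lt w (mul (pow g M) u)).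

Definition S_plus (h : G) : Prop :=
  lt e h /\ forall f g u v w, crossing f g u v w -> le e u -> le h w.

Definition S_minus (h : G) : Prop :=
  lt h e /\ forall f g u v w, crossing f g u v w -> le v e -> le w h.

Definition S_set (h : G) : Prop := h = e \/ S_plus h \/ S_minus h.

End LO.

(** [S] is a convex subgroup: convexity is immediate from the definitions,
    symmetry holds because a left translate of a crossing is again a crossing,
    and for [a, b] in [S⁺] a crossing with [w ≺ a b] would, after pushing [u]
    up to [a] and translating by [a⁻¹], give a crossing above [id] whose
    crossing point lies below [b].  [S] is Conradian: if [f, g ≻ id] in [S]
    satisfy [f gⁿ ⪯ g] for all [n], then [(f, g f, id, g³, f f g³)] is a
    crossing above [id] whose crossing point lies below [g].  Conversely, a
    convex Conradian subgroup [D] admits no crossing, since conjugating by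
    [p = f v] turns one into positive elements [a = p⁻¹ g f p], [b = p⁻¹ g p]
    of [D] with [a bⁿ ⪯ b]; convexity then forces [D ⊆ S], and maximality of
    the Conradian soul gives equality. *)

From Stdlib Require Import Classical Lia.

Section LeftOrderedGroup.
Variables (G : Type) (mul : G -> G -> G) (e : G) (inv : G -> G) (lt : G -> G -> Prop).
Hypothesis HG : is_group G mul e inv.
Hypothesis Hord : is_left_ordering G mul lt.

Local Notation le := (le G lt).
Local Notation pow := (pow G mul e).
Local Notation crossing := (crossing G mul e lt).
Local Notation S_plus := (S_plus G mul e lt).
Local Notation S_minus := (S_minus G mul e lt).
Local Notation S_set := (S_set G mul e lt).

Lemma mulgA a b c : mul a (mul b c) = mul (mul a b) c.
Proof. destruct HG as [H _]; apply H. Qed.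
Lemma mul1g a : mul e a = a.
Proof. destruct HG as [_ [H _]]; apply H. Qed.
Lemma mulg1 a : mul a e = a.
Proof. destruct HG as [_ [_ [H _]]]; apply H. Qed.
Lemma mulVg a : mul (inv a) a = e.
Proof. destruct HG as [_ [_ [_ [H _]]]]; apply H. Qed.
Lemma mulgV a : mul a (inv a) = e.
Proof. destruct HG as [_ [_ [_ [_ H]]]]; apply H. Qed.

Lemma mulKg a b : mul (inv a) (mul a b) = b.
Proof. rewrite mulgA, mulVg, mul1g; reflexivity. Qed.
Lemma mulKVg a b : mul a (mul (inv a) b) = b.
Proof. rewrite mulgA, mulgV, mul1g; reflexivity. Qed.
Lemma mulgK a b : mul (mul a b) (inv b) = a.
Proof. rewrite <- mulgA, mulgV, mulg1; reflexivity. Qed.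

Lemma invg_unique a b : mul a b = e -> b = inv a.
Proof. intro H. rewrite <- (mulKg a b), H, mulg1; reflexivity. Qed.
Lemma invgK a : inv (inv a) = a.
Proof. symmetry; apply invg_unique, mulVg. Qed.
Lemma invMg a b : inv (mul a b) = mul (inv b) (inv a).
Proof. symmetry; apply invg_unique. rewrite <- mulgA, mulKVg, mulgV; reflexivity. Qed.
Lemma invg1 : inv e = e.
Proof. symmetry; apply invg_unique, mulg1. Qed.

Lemma lt_irrefl a : ~ lt a a.
Proof. destruct Hord as [H _]; apply H. Qed.
Lemma lt_trans a b c : lt a b -> lt b c -> lt a c.
Proof. destruct Hord as [_ [H _]]; apply H. Qed.
Lemma lt_total a b : lt a b \/ a = b \/ lt b a.
Proof. destruct Hord as [_ [_ [H _]]]; apply H. Qed.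
Lemma lt_mul2l c a b : lt a b -> lt (mul c a) (mul c b).
Proof. destruct Hord as [_ [_ [_ H]]]; apply H. Qed.
Lemma lt_cancel_l c a b : lt (mul c a) (mul c b) -> lt a b.
Proof. intro H. apply (lt_mul2l (inv c)) in H. rewrite !mulKg in H. exact H. Qed.

Lemma le_refl a : le a a.
Proof. right; reflexivity. Qed.
Lemma le_trans a b c : le a b -> le b c -> le a c.
Proof. intros [H1|<-] [H2|<-]; [left; eauto using lt_trans | left | left | right]; auto. Qed.
Lemma lt_le_trans a b c : lt a b -> le b c -> lt a c.
Proof. intros H1 [H2|<-]; eauto using lt_trans. Qed.
Lemma le_lt_trans a b c : le a b -> lt b c -> lt a c.
Proof. intros [H1|<-] H2; eauto using lt_trans. Qed.
Lemma le_mul2l c a b : le a b -> le (mul c a) (mul c b).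
Proof. intros [H|<-]; [left; apply lt_mul2l, H | apply le_refl]. Qed.
Lemma lt_or_le a b : lt a b \/ le b a.
Proof. destruct (lt_total a b) as [H|[<-|H]]; [left | right; apply le_refl | right; left]; auto. Qed.
Lemma le_not_lt a b : le a b -> ~ lt b a.
Proof. intros H H'. apply (lt_irrefl a). eapply le_lt_trans; eauto. Qed.
Lemma lt_not_le a b : lt a b -> ~ le b a.
Proof. intros H H'. apply (lt_irrefl a). eapply lt_le_trans; eauto. Qed.

Lemma lt_mulr_pos a b : lt e b -> lt a (mul a b).
Proof. intro H. rewrite <- (mulg1 a) at 1. apply lt_mul2l, H. Qed.
Lemma lt_mulr_neg a b : lt b e -> lt (mul a b) a.
Proof. intro H. rewrite <- (mulg1 a) at 2. apply lt_mul2l, H. Qed.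
Lemma le_mulr_nonneg a b : le e b -> le a (mul a b).
Proof. intro H. rewrite <- (mulg1 a) at 1. apply le_mul2l, H. Qed.
Lemma mul_pos a b : lt e a -> lt e b -> lt e (mul a b).
Proof. intros Ha Hb. exact (lt_trans _ _ _ Ha (lt_mulr_pos a b Hb)). Qed.
Lemma invg_neg h : lt e h -> lt (inv h) e.
Proof. intro H. rewrite <- (mulVg h). apply lt_mulr_pos, H. Qed.
Lemma invg_pos h : lt h e -> lt e (inv h).
Proof. intro H. rewrite <- (mulVg h). apply lt_mulr_neg, H. Qed.
Lemma lt_pos_quotient p q : lt p q -> lt e (mul (inv p) q).
Proof. intro H. rewrite <- (mulVg p). apply lt_mul2l, H. Qed.

Lemma pow1 g : pow g 1 = g.
Proof. apply mulg1. Qed.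
Lemma pow_succ_r g n : pow g (S n) = mul (pow g n) g.
Proof.
  induction n as [|n IH]; simpl; [rewrite mulg1, mul1g; reflexivity|].
  simpl in IH. rewrite <- mulgA, <- IH; reflexivity.
Qed.
Lemma pow_add g n m : pow g (n + m) = mul (pow g n) (pow g m).
Proof. induction n as [|n IH]; simpl; [rewrite mul1g | rewrite IH, mulgA]; reflexivity. Qed.
Lemma pow_mul g a n : pow (pow g a) n = pow g (a * n).
Proof.
  induction n as [|n IH]; simpl; [rewrite <- mult_n_O; reflexivity|].
  rewrite IH, <- pow_add. f_equal. lia.
Qed.
Lemma pow_conj x g n : pow (mul x (mul g (inv x))) n = mul x (mul (pow g n) (inv x)).
Proof.
  induction n as [|n IH]; simpl; [rewrite mul1g, mulgV; reflexivity|].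
  rewrite IH, <- !mulgA, mulKg. reflexivity.
Qed.
Lemma pow_succ_act g n u : mul (pow g n) (mul g u) = mul (pow g (S n)) u.
Proof. rewrite pow_succ_r, mulgA; reflexivity. Qed.
Lemma pow_pos g n : lt e g -> lt e (pow g (S n)).
Proof.
  intro H. induction n as [|n IH]; [rewrite pow1; exact H|].
  rewrite pow_succ_r. apply mul_pos; assumption.
Qed.
Lemma pow_lt_succ g n : lt e g -> lt (pow g n) (pow g (S n)).
Proof. intro H. rewrite pow_succ_r. apply lt_mulr_pos, H. Qed.

(* Replacing [f] and [g] by [f^N] and [g^M], every crossing takes this form with [M = N = 1]. *)
Record simple_crossing (f g u v w : G) : Prop := {
  sc_uw : lt u w;
  sc_wv : lt w v;
  sc_gu_v : forall n, lt (mul (pow g n) u) v;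
  sc_u_fv : forall n, lt u (mul (pow f n) v);
  sc_fv_w : lt (mul f v) w;
  sc_w_gu : lt w (mul g u) }.
Arguments sc_uw {f g u v w}.
Arguments sc_wv {f g u v w}.
Arguments sc_gu_v {f g u v w}.
Arguments sc_u_fv {f g u v w}.
Arguments sc_fv_w {f g u v w}.
Arguments sc_w_gu {f g u v w}.

Lemma crossing_simple f g u v w :
  crossing f g u v w -> exists f' g', simple_crossing f' g' u v w.
Proof.
  intros [Huw [Hwv [Hg [Hf [M [N [HN HM]]]]]]].
  exists (pow f N), (pow g M). split; auto; intro n; rewrite pow_mul; auto.
Qed.

Lemma simple_crossing_crossing f g u v w :
  simple_crossing f g u v w -> crossing f g u v w.
Proof.
  intros [Huw Hwv Hg Hf Hfv Hgu]. repeat split; auto.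
  exists 1, 1. rewrite !pow1. auto.
Qed.

Lemma simple_crossing_translate x f g u v w : simple_crossing f g u v w ->
  simple_crossing (mul x (mul f (inv x))) (mul x (mul g (inv x)))
                  (mul x u) (mul x v) (mul x w).
Proof.
  intros [Huw Hwv Hg Hf Hfv Hgu].
  assert (Hact : forall h n y,
    mul (pow (mul x (mul h (inv x))) n) (mul x y) = mul x (mul (pow h n) y)).
  { intros h n y. rewrite pow_conj, <- !mulgA, mulKg. reflexivity. }
  split; try intro n; rewrite ?Hact; try apply lt_mul2l; auto.
  - rewrite <- (pow1 (mul x (mul f _))), Hact, pow1. apply lt_mul2l, Hfv.
  - rewrite <- (pow1 (mul x (mul g _))), Hact, pow1. apply lt_mul2l, Hgu.
Qed.

Section SimpleCrossing.
Context {f g u v w : G} (C : simple_crossing f g u v w).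

Lemma sc_u_fv1 : lt u (mul f v).
Proof. rewrite <- (pow1 f). apply (sc_u_fv C). Qed.
Lemma sc_gu_v1 : lt (mul g u) v.
Proof. rewrite <- (pow1 g). apply (sc_gu_v C). Qed.
Lemma sc_u_ffv : lt u (mul f (mul f v)).
Proof. pose proof (sc_u_fv C 2) as H. simpl in H. rewrite mulg1, <- mulgA in H. exact H. Qed.
Lemma sc_ggu_v : lt (mul g (mul g u)) v.
Proof. pose proof (sc_gu_v C 2) as H. simpl in H. rewrite mulg1, <- mulgA in H. exact H. Qed.
Lemma sc_fv_v : lt (mul f v) v.
Proof. exact (lt_trans _ _ _ (sc_fv_w C) (sc_wv C)). Qed.

Lemma sc_fpow_step k : lt (mul (pow f (S k)) v) (mul (pow f k) v).
Proof. rewrite <- pow_succ_act. apply lt_mul2l, sc_fv_v. Qed.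
Lemma sc_fpow_le k : le (mul (pow f (S k)) v) (mul f v).
Proof.
  induction k as [|k IH]; [rewrite pow1; apply le_refl|].
  exact (le_trans _ _ _ (or_introl (sc_fpow_step (S k))) IH).
Qed.

Lemma sc_window k : crossing f g u v (mul (pow f (S k)) v).
Proof.
  repeat split.
  - apply (sc_u_fv C).
  - exact (le_lt_trans _ _ _ (sc_fpow_le k) sc_fv_v).
  - apply (sc_gu_v C).
  - apply (sc_u_fv C).
  - exists 1, (S (S k)). split; [apply sc_fpow_step|].
    rewrite pow1. apply (le_lt_trans _ _ _ (sc_fpow_le k)).
    exact (lt_trans _ _ _ (sc_fv_w C) (sc_w_gu C)).
Qed.

Lemma sc_raise z : le u z -> (forall k, lt z (mul (pow f k) v)) ->
  simple_crossing f g z v w.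
Proof.
  intros Huz Hz.
  assert (Hzw : lt z w).
  { apply (lt_trans _ (mul f v)); [rewrite <- (pow1 f); apply Hz | apply C]. }
  split; auto; try apply C.
  - intro n. apply (lt_trans _ (mul (pow g n) (mul g u))).
    + apply lt_mul2l, (lt_trans _ _ _ Hzw), C.
    + rewrite pow_succ_act. apply C.
  - exact (lt_le_trans _ _ _ (sc_w_gu C) (le_mul2l g _ _ Huz)).
Qed.

End SimpleCrossing.

Lemma S_plus_pos h : S_plus h -> lt e h.
Proof. intros [H _]; exact H. Qed.
Lemma S_minus_neg h : S_minus h -> lt h e.
Proof. intros [H _]; exact H. Qed.

Lemma S_set_pos h : S_set h -> lt e h -> S_plus h.
Proof.
  intros [->|[H|H]] P; [exfalso; exact (lt_irrefl _ P) | exact H |].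
  exfalso; exact (lt_irrefl _ (lt_trans _ _ _ P (S_minus_neg _ H))).
Qed.
Lemma S_set_neg h : S_set h -> lt h e -> S_minus h.
Proof.
  intros [->|[H|H]] P; [exfalso; exact (lt_irrefl _ P) | | exact H].
  exfalso; exact (lt_irrefl _ (lt_trans _ _ _ P (S_plus_pos _ H))).
Qed.

Lemma S_plus_simple {h f g u v w} :
  S_plus h -> simple_crossing f g u v w -> le e u -> le h w.
Proof. intros [_ H] C. exact (H _ _ _ _ _ (simple_crossing_crossing _ _ _ _ _ C)). Qed.
Lemma S_minus_simple {h f g u v w} :
  S_minus h -> simple_crossing f g u v w -> le v e -> le w h.
Proof. intros [_ H] C. exact (H _ _ _ _ _ (simple_crossing_crossing _ _ _ _ _ C)). Qed.

(* Translating by [g] gives a crossing above [id] with crossing point [g w ≺ g g u ≺ v]. *)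
Lemma S_plus_lt_top h f g u v w :
  S_plus h -> simple_crossing f g u v w -> le e w -> lt h v.
Proof.
  intros Hh C Hw.
  assert (Hgw : le h (mul g w)).
  { apply (S_plus_simple Hh (simple_crossing_translate g _ _ _ _ _ C)).
    left. exact (le_lt_trans _ _ _ Hw (sc_w_gu C)). }
  apply (le_lt_trans _ _ _ Hgw), (lt_trans _ (mul g (mul g u))).
  - apply lt_mul2l, (sc_w_gu C).
  - apply (sc_ggu_v C).
Qed.

(* Translating by [f] gives a crossing below [id] with crossing point [f w ≻ f f v ≻ u]. *)
Lemma S_minus_gt_bottom h f g u v w :
  S_minus h -> simple_crossing f g u v w -> le w e -> lt u h.
Proof.
  intros Hh C Hw.
  assert (Hfw : le (mul f w) h).
  { apply (S_minus_simple Hh (simple_crossing_translate f _ _ _ _ _ C)).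
    left. exact (lt_le_trans _ _ _ (sc_fv_w C) Hw). }
  destruct (lt_or_le u h) as [H|H]; [exact H|]. exfalso.
  apply (lt_not_le _ _ (sc_u_ffv C)).
  apply (le_trans _ _ _ (or_introl (lt_mul2l f _ _ (sc_fv_w C)))), (le_trans _ _ _ Hfw), H.
Qed.

Lemma S_plus_down h k : S_plus k -> lt e h -> lt h k -> S_plus h.
Proof.
  intros [_ Hk] Hh Hhk. split; [exact Hh|]. intros f g u v w C Hu.
  left. exact (lt_le_trans _ _ _ Hhk (Hk _ _ _ _ _ C Hu)).
Qed.
Lemma S_minus_up h k : S_minus k -> lt k h -> lt h e -> S_minus h.
Proof.
  intros [_ Hk] Hkh Hh. split; [exact Hh|]. intros f g u v w C Hv.
  left. exact (le_lt_trans _ _ _ (Hk _ _ _ _ _ C Hv) Hkh).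
Qed.

Lemma S_convex : is_convex G lt S_set.
Proof.
  intros k1 h k2 H1 H2 L1 L2.
  destruct (lt_total e h) as [P|[<-|P]]; [right; left | left; reflexivity | right; right].
  - exact (S_plus_down _ _ (S_set_pos _ H2 (lt_trans _ _ _ P L2)) P L2).
  - exact (S_minus_up _ _ (S_set_neg _ H1 (lt_trans _ _ _ L1 P)) L1 P).
Qed.

Lemma S_plus_inv h : S_plus h -> S_minus (inv h).
Proof.
  intro Hh. split; [apply invg_neg, S_plus_pos, Hh|].
  intros f g u v w C Hv.
  destruct (lt_or_le (inv h) w) as [H|H]; [exfalso | exact H].
  destruct (crossing_simple _ _ _ _ _ C) as [f' [g' C']].
  assert (Hhw : le e (mul h w)). { left. rewrite <- (mulgV h). apply lt_mul2l, H. }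
  apply (lt_not_le _ _
    (S_plus_lt_top _ _ _ _ _ _ Hh (simple_crossing_translate h _ _ _ _ _ C') Hhw)).
  rewrite <- (mulg1 h) at 2. apply le_mul2l, Hv.
Qed.

Lemma S_minus_inv h : S_minus h -> S_plus (inv h).
Proof.
  intro Hh. split; [apply invg_pos, S_minus_neg, Hh|].
  intros f g u v w C Hu.
  destruct (lt_or_le w (inv h)) as [H|H]; [exfalso | exact H].
  destruct (crossing_simple _ _ _ _ _ C) as [f' [g' C']].
  assert (Hhw : le (mul h w) e). { left. rewrite <- (mulgV h). apply lt_mul2l, H. }
  apply (lt_not_le _ _
    (S_minus_gt_bottom _ _ _ _ _ _ Hh (simple_crossing_translate h _ _ _ _ _ C') Hhw)).
  rewrite <- (mulg1 h) at 1. apply le_mul2l, Hu.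
Qed.

Lemma S_plus_mul a b : S_plus a -> S_plus b -> S_plus (mul a b).
Proof.
  intros Ha Hb. split; [apply mul_pos; apply S_plus_pos; assumption|].
  intros f g u v w C Hu.
  destruct (lt_or_le w (mul a b)) as [H|H]; [exfalso | exact H].
  destruct (crossing_simple _ _ _ _ _ C) as [f' [g' C']].
  assert (Hbottom_lt_a : forall z, simple_crossing f' g' z v w -> le a z -> False).
  { intros z Cz Hz.
    assert (Hbw : le b (mul (inv a) w)).
    { apply (S_plus_simple Hb (simple_crossing_translate (inv a) _ _ _ _ _ Cz)).
      rewrite <- (mulVg a). apply le_mul2l, Hz. }
    apply (le_not_lt _ _ Hbw). rewrite <- (mulKg a b). apply lt_mul2l, H. }
  destruct (lt_or_le u a) as [Hua|Hau]; [|exact (Hbottom_lt_a u C' Hau)].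
  (* Raising [u] to [a] keeps a crossing, since each [f'^(k+1) v] is a crossing point above [id]. *)
  apply (Hbottom_lt_a a); [|apply le_refl].
  apply (sc_raise C'); [left; exact Hua|]. intro k.
  apply (le_lt_trans _ _ _ (proj2 Ha _ _ _ _ _ (sc_window C' k) Hu)), (sc_fpow_step C').
Qed.

Lemma S_set_e : S_set e.
Proof. left; reflexivity. Qed.

Lemma S_set_inv h : S_set h -> S_set (inv h).
Proof.
  intros [->|[H|H]]; [rewrite invg1; exact S_set_e | right; right | right; left].
  - exact (S_plus_inv _ H).
  - exact (S_minus_inv _ H).
Qed.
Lemma S_set_of_inv h : S_set (inv h) -> S_set h.
Proof. intro H. rewrite <- (invgK h). exact (S_set_inv _ H). Qed.

Lemma S_set_mul_pos_neg a b : S_plus a -> S_minus b -> S_set (mul a b).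
Proof.
  intros Ha Hb.
  assert (Hlt : lt (mul a b) a) by (apply lt_mulr_neg, S_minus_neg, Hb).
  destruct (lt_total e (mul a b)) as [P|[<-|P]]; [| exact S_set_e |].
  - exact (S_convex e _ a S_set_e (or_intror (or_introl Ha)) P Hlt).
  - apply S_set_of_inv. rewrite invMg.
    apply (S_convex e _ (inv b) S_set_e (or_intror (or_introl (S_minus_inv _ Hb)))).
    + rewrite <- invMg. apply invg_pos, P.
    + apply lt_mulr_neg, invg_neg, S_plus_pos, Ha.
Qed.
Lemma S_set_mul_neg_pos a b : S_minus a -> S_plus b -> S_set (mul a b).
Proof.
  intros Ha Hb.
  assert (Hgt : lt a (mul a b)) by (apply lt_mulr_pos, S_plus_pos, Hb).
  destruct (lt_total e (mul a b)) as [P|[<-|P]]; [| exact S_set_e |].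
  - apply S_set_of_inv. rewrite invMg.
    apply (S_convex (inv b) _ e (or_intror (or_intror (S_plus_inv _ Hb))) S_set_e).
    + apply lt_mulr_pos, invg_pos, S_minus_neg, Ha.
    + rewrite <- invMg. apply invg_neg, P.
  - exact (S_convex a _ e (or_intror (or_intror Ha)) S_set_e Hgt P).
Qed.

Lemma S_set_mul a b : S_set a -> S_set b -> S_set (mul a b).
Proof.
  intros [->|[Ha|Ha]] Hb; [rewrite mul1g; exact Hb | |];
    (destruct Hb as [->|[Hb|Hb]]; [rewrite mulg1; right; auto | |]).
  - right; left; apply S_plus_mul; assumption.
  - apply S_set_mul_pos_neg; assumption.
  - apply S_set_mul_neg_pos; assumption.
  - apply S_set_of_inv. rewrite invMg. right; left.
    apply S_plus_mul; apply S_minus_inv; assumption.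
Qed.

Lemma non_conradian_crossing f g : lt e f -> lt e g ->
  (forall n, le (mul f (pow g n)) g) ->
  crossing f (mul g f) e (pow g 3) (mul f (mul f (pow g 3))) /\
  lt (mul f (mul f (pow g 3))) g.
Proof.
  intros Pf Pg Hbound.
  assert (Pg2 : lt e (pow g 2)) by apply pow_pos, Pg.
  assert (Hg23 : lt (pow g 2) (pow g 3)) by apply pow_lt_succ, Pg.
  assert (Hg3 : lt g (pow g 3)).
  { rewrite <- (pow1 g) at 1. exact (lt_trans _ _ _ (pow_lt_succ g 1 Pg) Hg23). }
  assert (HfV : lt (mul f (pow g 3)) (pow g 3)) by exact (le_lt_trans _ _ _ (Hbound 3) Hg3).
  (* On [[id, g²]] one has [f x ⪯ f g² ⪯ g], so [g f] maps this interval into itself. *)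
  assert (Hstable : forall x, le e x -> le x (pow g 2) ->
                      le e (mul g (mul f x)) /\ le (mul g (mul f x)) (pow g 2)).
  { intros x H0 H2. split.
    - left. apply mul_pos; [exact Pg|]. exact (lt_le_trans _ _ _ Pf (le_mulr_nonneg f x H0)).
    - replace (pow g 2) with (mul g g) by (simpl; rewrite mulg1; reflexivity).
      apply le_mul2l, (le_trans _ _ _ (le_mul2l f _ _ H2)), Hbound. }
  assert (Horbit : forall n, le e (pow (mul g f) n) /\ le (pow (mul g f) n) (pow g 2)).
  { induction n as [|n [IH0 IH2]]; [split; [apply le_refl | left; exact Pg2]|].
    simpl. rewrite <- mulgA. apply Hstable; assumption. }
  assert (Hffv : lt (mul f (mul f (pow g 3))) (mul f (pow g 3))) by apply lt_mul2l, HfV.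
  assert (Hffv_g : lt (mul f (mul f (pow g 3))) g) by exact (lt_le_trans _ _ _ Hffv (Hbound 3)).
  split; [repeat split | exact Hffv_g].
  - apply mul_pos; [exact Pf|]. apply mul_pos; [exact Pf | apply pow_pos, Pg].
  - exact (lt_trans _ _ _ Hffv HfV).
  - intro n. rewrite mulg1. exact (le_lt_trans _ _ _ (proj2 (Horbit n)) Hg23).
  - intros [|n]; [rewrite mul1g; apply pow_pos, Pg|].
    apply mul_pos; apply pow_pos; assumption.
  - exists 1, 3. split.
    + simpl. rewrite mulg1, <- !mulgA. apply lt_mul2l, Hffv.
    + rewrite pow1, mulg1. exact (lt_trans _ _ _ Hffv_g (lt_mulr_pos _ _ Pf)).
Qed.

Lemma S_conradian : conradian_on G mul e lt S_set.
Proof.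
  intros f g Hf Hg Pf Pg.
  destruct (classic (exists n, lt g (mul f (pow g n)))) as [H|H]; [exact H | exfalso].
  assert (Hbound : forall n, le (mul f (pow g n)) g).
  { intro n. destruct (lt_or_le g (mul f (pow g n))) as [H'|H']; [exfalso; eauto | exact H']. }
  destruct (non_conradian_crossing f g Pf Pg Hbound) as [C Hw].
  exact (le_not_lt _ _ (proj2 (S_set_pos g Hg Pg) _ _ _ _ _ C (le_refl e)) Hw).
Qed.

Section ConvexSubgroup.
Variable D : G -> Prop.
Hypothesis Dsub : is_subgroup G mul e inv D.
Hypothesis Dconv : is_convex G lt D.
Hypothesis Dconr : conradian_on G mul e lt D.

Let D_e : D e := proj1 Dsub.
Let D_mul a b : D a -> D b -> D (mul a b) := proj1 (proj2 Dsub) a b.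
Let D_inv a : D a -> D (inv a) := proj2 (proj2 Dsub) a.

Lemma not_in_convex_neg x : ~ D x -> lt x e -> forall d, D d -> lt x d.
Proof.
  intros Nx Lx d Hd. destruct (lt_or_le x d) as [H|H]; [exact H | exfalso].
  destruct H as [H| ->]; [exact (Nx (Dconv d x e Hd D_e H Lx)) | exact (Nx Hd)].
Qed.
Lemma not_in_convex_pos x : ~ D x -> lt e x -> forall d, D d -> lt d x.
Proof.
  intros Nx Lx d Hd. destruct (lt_or_le d x) as [H|H]; [exact H | exfalso].
  destruct H as [H|<-]; [exact (Nx (Dconv e x d D_e Hd Lx H)) | exact (Nx Hd)].
Qed.

Lemma D_of_quotient a b : D a -> D (mul (inv b) a) -> D b.
Proof.
  intros Ha Hq. replace b with (mul a (inv (mul (inv b) a))).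
  - exact (D_mul _ _ Ha (D_inv _ Hq)).
  - rewrite invMg, invgK, mulKVg. reflexivity.
Qed.

(* Otherwise [y = v⁻¹ f v ≺ id] lies outside [D], hence below [(f v)⁻¹ u], giving [f f v = (f v) y ≺ u]. *)
Lemma sc_top_in {f g u v w} : simple_crossing f g u v w -> D u -> D w -> D v.
Proof.
  intros C Du Dw. destruct (classic (D v)) as [Dv|Nv]; [exact Dv | exfalso].
  assert (Dfv : D (mul f v)) by exact (Dconv u _ w Du Dw (sc_u_fv1 C) (sc_fv_w C)).
  assert (Hy : lt (mul (inv v) (mul f v)) e).
  { rewrite <- (mulVg v). apply lt_mul2l, (sc_fv_v C). }
  pose proof (not_in_convex_neg _ (fun Dy => Nv (D_of_quotient _ _ Dfv Dy)) Hy
                (mul (inv (mul f v)) u) (D_mul _ _ (D_inv _ Dfv) Du)) as H.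
  apply (lt_mul2l (mul f v)) in H. rewrite !mulKVg in H.
  rewrite mulgA, mulgK in H. exact (lt_irrefl u (lt_trans _ _ _ (sc_u_ffv C) H)).
Qed.

(* Otherwise [y = u⁻¹ g u ≻ id] lies outside [D], hence above [(g u)⁻¹ v], giving [g g u = (g u) y ≻ v]. *)
Lemma sc_bottom_in {f g u v w} : simple_crossing f g u v w -> D w -> D v -> D u.
Proof.
  intros C Dw Dv. destruct (classic (D u)) as [Du|Nu]; [exact Du | exfalso].
  assert (Dgu : D (mul g u)) by exact (Dconv w _ v Dw Dv (sc_w_gu C) (sc_gu_v1 C)).
  assert (Hy : lt e (mul (inv u) (mul g u))).
  { rewrite <- (mulVg u). apply lt_mul2l, (lt_trans _ _ _ (sc_uw C) (sc_w_gu C)). }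
  pose proof (not_in_convex_pos _ (fun Dy => Nu (D_of_quotient _ _ Dgu Dy)) Hy
                (mul (inv (mul g u)) v) (D_mul _ _ (D_inv _ Dgu) Dv)) as H.
  apply (lt_mul2l (mul g u)) in H. rewrite !mulKVg in H.
  rewrite mulgA, mulgK in H. exact (lt_irrefl v (lt_trans _ _ _ H (sc_ggu_v C))).
Qed.

Lemma sc_not_in_conradian {f g u v w} : simple_crossing f g u v w -> D u -> D v -> False.
Proof.
  intros C Du Dv.
  assert (Dw : D w) by exact (Dconv u w v Du Dv (sc_uw C) (sc_wv C)).
  set (p := mul f v).
  assert (Dp : D p) by exact (Dconv u _ w Du Dw (sc_u_fv1 C) (sc_fv_w C)).
  assert (Df : D f) by (rewrite <- (mulgK f v); exact (D_mul _ _ Dp (D_inv _ Dv))).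
  assert (Dg : D g).
  { rewrite <- (mulgK g u).
    exact (D_mul _ _ (Dconv w _ v Dw Dv (sc_w_gu C) (sc_gu_v1 C)) (D_inv _ Du)). }
  assert (Hp_gu : lt p (mul g u)) by exact (lt_trans _ _ _ (sc_fv_w C) (sc_w_gu C)).
  destruct (Dconr (mul (inv p) (mul (mul g f) p)) (mul (inv p) (mul g p)))
    as [n Hn].
  - apply D_mul; [apply D_inv, Dp | apply D_mul; [apply D_mul|]; assumption].
  - apply D_mul; [apply D_inv, Dp | apply D_mul; assumption].
  - apply lt_pos_quotient, (lt_trans _ _ _ Hp_gu). rewrite <- mulgA. apply lt_mul2l, (sc_u_ffv C).
  - apply lt_pos_quotient, (lt_trans _ _ _ Hp_gu), lt_mul2l, (sc_u_fv1 C).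
  - (* [a bⁿ = p⁻¹ g f gⁿ p], so [b ≺ a bⁿ] means [p ≺ f gⁿ p], while [gⁿ p ≺ v] gives [f gⁿ p ≺ p]. *)
    pose proof (pow_conj (inv p) g n) as Hbn. rewrite invgK in Hbn. rewrite Hbn in Hn.
    rewrite <- !mulgA, mulKVg in Hn. apply lt_cancel_l, lt_cancel_l in Hn.
    assert (Hgnp : lt (mul (pow g n) p) v).
    { apply (lt_trans _ (mul (pow g n) (mul g u))); [apply lt_mul2l, Hp_gu|].
      rewrite pow_succ_act. apply (sc_gu_v C). }
    exact (lt_irrefl _ (lt_trans _ _ _ Hn (lt_mul2l f _ _ Hgnp))).
Qed.

Lemma D_sub_S_set h : D h -> S_set h.
Proof.
  intro Dh. destruct (lt_total e h) as [P|[<-|P]]; [right; left | exact S_set_e | right; right].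
  - split; [exact P|]. intros f g u v w C Hu.
    destruct (lt_or_le w h) as [Hwh|Hhw]; [exfalso | exact Hhw].
    destruct (crossing_simple _ _ _ _ _ C) as [f' [g' C']].
    assert (Dw : D w) by exact (Dconv e w h D_e Dh (le_lt_trans _ _ _ Hu (sc_uw C')) Hwh).
    assert (Du : D u).
    { destruct Hu as [Hu|<-]; [exact (Dconv e u w D_e Dw Hu (sc_uw C')) | exact D_e]. }
    exact (sc_not_in_conradian C' Du (sc_top_in C' Du Dw)).
  - split; [exact P|]. intros f g u v w C Hv.
    destruct (lt_or_le h w) as [Hhw|Hwh]; [exfalso | exact Hwh].
    destruct (crossing_simple _ _ _ _ _ C) as [f' [g' C']].
    assert (Dw : D w) by exact (Dconv h w e Dh D_e Hhw (lt_le_trans _ _ _ (sc_wv C') Hv)).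
    assert (Dv : D v).
    { destruct Hv as [Hv| ->]; [exact (Dconv w v e Dw D_e (sc_wv C') Hv) | exact D_e]. }
    exact (sc_not_in_conradian C' (sc_bottom_in C' Dw Dv) Dv).
Qed.

End ConvexSubgroup.

Lemma convex_conradian_sub_S_set D :
  convex_conradian G mul e inv lt D -> forall h, D h -> S_set h.
Proof. intros [Dsub [Dconv Dconr]]. exact (D_sub_S_set D Dsub Dconv Dconr). Qed.

Lemma S_set_convex_conradian : convex_conradian G mul e inv lt S_set.
Proof.
  split; [split; [exact S_set_e | split; [exact S_set_mul | exact S_set_inv]] |].
  split; [exact S_convex | exact S_conradian].
Qed.

End LeftOrderedGroup.

Theorem mainTheorem7 (G : Type) (mul : G -> G -> G) (e : G) (inv : G -> G)
    (lt : G -> G -> Prop)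
    (HG : is_group G mul e inv) (Hord : is_left_ordering G mul lt) :
  is_conradian_soul G mul e inv lt (S_set G mul e lt) /\
  (forall C : G -> Prop, is_conradian_soul G mul e inv lt C ->
     forall h, C h <-> S_set G mul e lt h).
Proof.
  pose proof (S_set_convex_conradian G mul e inv lt HG Hord) as HS.
  pose proof (convex_conradian_sub_S_set G mul e inv lt HG Hord) as Hsub.
  split.
  - split; [exact HS|]. intros D HD _. exact (Hsub D HD).
  - intros C [HC Hmax] h. split; [exact (Hsub C HC h)|].
    exact (Hmax _ HS (Hsub C HC) h).
Qed.
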